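(* Let $\lambda\mapsto|\psi_\lambda\rangle\in\mathbb{C}^N$ be a twice continuously differentiable curve of unit vectors, and let $\rho_\lambda=|\psi_\lambda\rangle\langle\psi_\lambda|$. At a fixed $\lambda$ put $|0\rangle=|\psi_\lambda\rangle$, $|v\rangle=\partial_\lambda|\psi_\lambda\rangle$ and $|v^\perp\rangle=|v\rangle-\langle 0|v\rangle|0\rangle$, and assume $|v^\perp\rangle\neq0$. Let $\mathcal{B}^\lambda_\alpha$ be any orthonormal basis of $\mathbb{C}^N$ that contains the two vectors $|\pm\rangle=\frac{1}{\sqrt2}\big(|0\rangle\pm|v^\perp\rangle/\langle v^\perp|v^\perp\rangle^{1/2}\big)$. Equivalently, $\mathcal{B}^\lambda_\alpha$ is any orthonormal eigenbasis of the SLD $L_\lambda=2(|v\rangle\langle0|+|0\rangle\langle v|)$. Then $$-\Big[\partial^2_{\delta\lambda}\,\mathrm{Coh}_{\mathcal{B}^\lambda_\alpha}(\rho_{\lambda+\delta\lambda})\Big]_{\delta\lambda=0}=4g^{FS}_\lambda.$$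
   Context: All logarithms are natural logarithms. For an orthonormal basis $\mathcal{B}=\{|x\rangle\}$, the relative entropy of coherence of $\mathcal{B}$ with respect to $\rho$ is $\mathrm{Coh}_{\mathcal{B}}(\rho)=-\mathcal{V}(\rho)+H(p)$. Here $p_x=\langle x|\rho|x\rangle$, $\mathcal{V}$ is the von Neumann entropy and $H$ is the Shannon entropy. The Fubini–Study metric is $g^{FS}_\lambda=\langle v|v\rangle-|\langle v|0\rangle|^2=\langle v^\perp|v^\perp\rangle$. Equivalently, $4g^{FS}_\lambda$ equals the quantum Fisher information of the pure-state family at $\lambda$. *)

From HB Require Import structures.
From mathcomp Require Import all_boot all_order all_algebra.
From mathcomp Require Import all_classical all_reals all_analysis.
From mathcomp Require Import complex.
Set Implicit Arguments. Unset Strict Implicit. Unset Printing Implicit Defensive.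
Import Order.TTheory GRing.Theory Num.Theory.
Import numFieldNormedType.Exports.
Local Open Scope ring_scope.
Local Open Scope classical_set_scope.

Section QDefs.
Variable R : realType.
Local Notation C := (complex R).

Definition cdot (N : nat) (u w : 'cV[C]_N) : C := \sum_(k < N) (u k 0)^* * w k 0.

Definition ketbra (N : nat) (u w : 'cV[C]_N) : 'M[C]_N :=
  \matrix_(i, j) (u i 0 * (w j 0)^*).

Definition C2 (f : R -> R) : Prop :=
  (forall x, derivable f x 1) /\ (forall x, derivable f^`() x 1) /\
  continuous (f^`(2) : R -> R).

Definition curveC2 (N : nat) (psi : R -> 'cV[C]_N) : Prop :=
  forall k : 'I_N, C2 (fun t => complex.Re (psi t k 0)) /\
                   C2 (fun t => complex.Im (psi t k 0)).

Definition dcurve (N : nat) (psi : R -> 'cV[C]_N) (mu : R) : 'cV[C]_N :=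
  \col_k (Complex ((fun t => complex.Re (psi t k 0))^`() mu)
                  ((fun t => complex.Im (psi t k 0))^`() mu)).

(* Shannon entropy (natural log; 0 ln 0 = 0 since ln 0 = 0 in the library) *)
Definition shannon (N : nat) (p : 'I_N -> R) : R := - \sum_(x < N) p x * ln (p x).

(* the eigenvalues (with multiplicity) of a square matrix: the roots of its
   characteristic polynomial, which splits over the algebraically closed C *)
Definition spectrum (N : nat) (A : 'M[C]_N) : seq C :=
  sval (closed_field_poly_normal (char_poly A)).

(* von Neumann entropy  V(rho) = - tr (rho ln rho) = - sum_i l_i ln l_i
   over the (real) eigenvalues l_i of the density matrix rho *)
Definition vonNeumann (N : nat) (rho : 'M[C]_N) : R :=
  - \sum_(l <- spectrum rho) complex.Re l * ln (complex.Re l).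

Definition orthonormal_basis (N : nat) (U : 'M[C]_N) : Prop :=
  forall i j : 'I_N, cdot (col i U) (col j U) = (i == j)%:R.

Definition coherence (N : nat) (U : 'M[C]_N) (rho : 'M[C]_N) : R :=
  - vonNeumann rho
  + shannon (fun x : 'I_N => complex.Re (cdot (col x U) (rho *m col x U))).

Definition gFS (N : nat) (psi0 v : 'cV[C]_N) : R :=
  complex.Re (cdot v v) - complex.Re (cdot v psi0 * (cdot v psi0)^*).

End QDefs.

From HB Require Import structures.
From mathcomp Require Import all_boot all_order all_algebra.
From mathcomp Require Import all_classical all_reals all_analysis.
From mathcomp Require Import complex.
From mathcomp Require Import ring lra.
Import Order.TTheory GRing.Theory Num.Theory.
Import numFieldNormedType.Exports.
Local Open Scope ring_scope.
Local Open Scope classical_set_scope.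

(* rho = |psi><psi| is pure, so its von Neumann entropy vanishes and the
   coherence is the Shannon entropy of p_x = |<x|psi>|^2 = a_x^2 + b_x^2.
   The function p ln p is differentiable even where p = 0, with derivative
   p' (ln p + 1), and this derivative is again differentiable at any point
   where a, b, a', b' all vanish; at lambda this happens for every basis
   vector except |+> and |->.  As sum_x p_x = 1, we get p_+ = p_- = 1/2 and
   the first and second derivatives of the p_x sum to zero, so the second
   derivative of the entropy collapses to -(p_+' - p_-')^2.  Finally
   p_+' - p_-' = 2 |v_perp| and |v_perp|^2 = g^FS. *)

Section RealAnalysis.
Context {R : realType}.
Implicit Types (a b g z : R -> R) (s t : R).

Lemma is_derive_eq0_of_bound {g a b z : R -> R} {t : R} :
  derivable a t 1 -> derivable b t 1 -> a t = 0 -> b t = 0 -> g t = 0 ->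
  z s @[s --> t] --> 0 ->
  (forall s, `|g s| <= (`|a s| + `|b s|) * z s) -> is_derive t 1 g 0.
Proof.
move=> da db a0 b0 g0 z0 gle.
pose q (f : R -> R) (h : R) : R := h^-1 *: ((f \o shift t) (h *: 1) - f t).
have qa : q a h @[h --> 0^'] --> 'D_1 a t := da.
have qb : q b h @[h --> 0^'] --> 'D_1 b t := db.
have ht : h + t @[h --> 0^'] --> t.
  apply: cvg_within_filter; rewrite -{2}(add0r t).
  by apply: cvgD; [exact: cvg_id | exact: cvg_cst].
have qg0 : q g h @[h --> 0^'] --> 0.
  apply: norm_cvg0.
  apply: (@squeeze_cvgr _ _ _ _ (fun=> 0)
    (fun h => (`|q a h| + `|q b h|) * z (h + t))); last 2 first.
  - exact: cvg_cst.
  - rewrite -[X in _ --> X](mulr0 (`|'D_1 a t| + `|'D_1 b t|)).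
    by apply: cvgM; [apply: cvgD; apply: cvg_norm | exact: cvg_comp ht z0].
  near=> h; rewrite normr_ge0 /q /= g0 a0 b0 !subr0 !normrZ -mulrDr -mulrA.
  by rewrite ler_wpM2l // [_%:A]mulr1.
by apply: DeriveDef; [apply/cvg_ex; exists 0 | exact: cvg_lim qg0].
Unshelve. all: by end_near.
Qed.

Lemma sqrt_mul_ln_le s : 0 < s <= 1 ->
  `|Num.sqrt s * ln s| <= 4 * Num.sqrt (Num.sqrt s).
Proof.
case/andP=> s_gt0 s_le1; set r := Num.sqrt (Num.sqrt s).
have r_gt0 : 0 < r by rewrite !sqrtr_gt0.
have r2_ge0 : 0 <= r ^+ 2 by rewrite exprn_ge0 // ltW.
have sqrt_sE : Num.sqrt s = r ^+ 2 by rewrite sqr_sqrtr ?sqrtr_ge0.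
have lnsE : ln s = ln r *+ 4.
  by rewrite -lnXn // -[4%N]/(2 * 2)%N exprM -sqrt_sE sqr_sqrtr // ltW.
have lnr_lt : - ln r < r^-1 by rewrite -lnV ?posrE // ln_sublinear ?invr_gt0.
rewrite normrM sqrt_sE (ger0_norm r2_ge0) (ler0_norm (ln_le0 s_le1)) lnsE.
rewrite -mulNrn (@le_trans _ _ (r ^+ 2 * (r^-1 *+ 4))) //.
  by rewrite ler_wpM2l // ler_pMn2r // ltW.
by rewrite mulrnAr expr2 mulrK ?unitfE ?gt_eqF // mulr_natl.
Qed.

Lemma sqrt_mul_ln_cvg0 : Num.sqrt s * ln s @[s --> (0 : R)] --> 0.
Proof.
apply: norm_cvg0.
apply: (@squeeze_cvgr _ _ _ _ (fun=> 0) (fun s => 4 * Num.sqrt (Num.sqrt `|s|))).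
- near=> s; rewrite normr_ge0 /=.
  have [s_le0|s_gt0] := leP s 0.
    by rewrite ler0_sqrtr // mul0r normr0 mulr_ge0 ?sqrtr_ge0.
  rewrite (gtr0_norm s_gt0) sqrt_mul_ln_le // s_gt0 -(gtr0_norm s_gt0).
  by near: s; exact: (@nbhs0_le _ R^o _ ltr01).
- exact: cvg_cst.
- rewrite -[X in _ --> X](mulr0 4) -[X in _ * X]sqrtr0 -[X in Num.sqrt X]sqrtr0.
  rewrite -[X in Num.sqrt (Num.sqrt X)](normr0 R).
  apply: cvgM; first exact: cvg_cst.
  apply: continuous_cvg; first exact: sqrt_continuous.
  apply: continuous_cvg; first exact: sqrt_continuous.
  exact: cvg_norm.
Unshelve. all: by end_near.
Qed.


Lemma sqrt_sqrD_le (x y : R) : Num.sqrt (x ^+ 2 + y ^+ 2) <= `|x| + `|y|.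
Proof.
have xy_ge0 : 0 <= `|x| + `|y| by rewrite addr_ge0.
rewrite -(ger0_norm xy_ge0) -sqrtr_sqr ler_sqrt ?sqr_ge0 //.
rewrite sqrrD !real_normK ?num_real // -addrA lerD2l lerDr.
by rewrite mulrn_wge0 ?mulr_ge0.
Qed.

Lemma normr_le_sqrt_sqrD (x y : R) : `|x| <= Num.sqrt (x ^+ 2 + y ^+ 2).
Proof. by rewrite -sqrtr_sqr ler_sqrt ?addr_ge0 ?sqr_ge0 // lerDl sqr_ge0. Qed.

Definition sqmod a b t := a t ^+ 2 + b t ^+ 2.
Definition dsqmod a b t := 2 * (a t * derive1 a t + b t * derive1 b t).
Definition d2sqmod a b t :=
  2 * (derive1 a t ^+ 2 + a t * derive1 (derive1 a) t
       + (derive1 b t ^+ 2 + b t * derive1 (derive1 b) t)).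
Definition plnp a b t := sqmod a b t * ln (sqmod a b t).
Definition dplnp a b t := dsqmod a b t * (ln (sqmod a b t) + 1).

Section Sqmod.
Context {a b : R -> R}.

Lemma sqmod_ge0 t : 0 <= sqmod a b t.
Proof. by rewrite addr_ge0 ?sqr_ge0. Qed.

Lemma sqmod_eq0 {t} : sqmod a b t = 0 -> a t = 0 /\ b t = 0.
Proof.
by move/eqP; rewrite paddr_eq0 ?sqr_ge0 // !sqrf_eq0 => /andP[/eqP-> /eqP->].
Qed.

Lemma sqmod_vanish {t} : a t = 0 -> b t = 0 -> derive1 a t = 0 -> derive1 b t = 0 ->
  [/\ sqmod a b t = 0, dsqmod a b t = 0 & d2sqmod a b t = 0].
Proof.
move=> a0 b0 a'0 b'0; rewrite /sqmod /dsqmod /d2sqmod a0 b0 a'0 b'0.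
move: (derive1 (derive1 a) t) (derive1 (derive1 b) t) => a'' b''.
by rewrite expr0n !mul0r !addr0 mulr0.
Qed.

Lemma normr_dsqmod_le s :
  `|dsqmod a b s| <= 2 * Num.sqrt (sqmod a b s) * (`|derive1 a s| + `|derive1 b s|).
Proof.
rewrite normrM normr_nat -mulrA ler_wpM2l // mulrDr.
apply: (le_trans (ler_normD _ _)); rewrite !normrM.
apply: lerD; rewrite ler_wpM2r //; first exact: normr_le_sqrt_sqrD.
by rewrite /sqmod addrC normr_le_sqrt_sqrD.
Qed.

Context {t : R}.
Hypotheses (da : derivable a t 1) (db : derivable b t 1).

Lemma is_derive_sqmod : is_derive t 1 (sqmod a b) (dsqmod a b t).
Proof.
have := is_deriveD (is_deriveX 2 (derivableP da)) (is_deriveX 2 (derivableP db)).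
by rewrite /dsqmod !derive1E /GRing.scale /= -!mulrA -mulrDr.
Qed.

Lemma sqmod_cvg : sqmod a b s @[s --> t] --> sqmod a b t.
Proof.
have /derivable1_diffP/differentiable_continuous // : derivable (sqmod a b) t 1.
by case: is_derive_sqmod.
Qed.

Lemma sqrt_sqmod_mul_ln_cvg0 : sqmod a b t = 0 ->
  Num.sqrt (sqmod a b s) * ln (sqmod a b s) @[s --> t] --> 0.
Proof.
move=> p0; apply: (cvg_comp _ _ _ sqrt_mul_ln_cvg0).
by have := sqmod_cvg; rewrite p0.
Qed.

Lemma is_derive_plnp : is_derive t 1 (plnp a b) (dplnp a b t).
Proof.
have [p_gt0|] := ltP 0 (sqmod a b t).
  have := is_deriveM is_derive_sqmod
    (is_derive1_comp (is_derive1_ln p_gt0) is_derive_sqmod).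
  suff -> : dplnp a b t = sqmod a b t *: ((sqmod a b t)^-1 * dsqmod a b t)
    + ln (sqmod a b t) *: dsqmod a b t by [].
  by rewrite /dplnp /GRing.scale /=; field; rewrite gt_eqF.
rewrite le_eqVlt ltNge sqmod_ge0 orbF => /eqP p0.
(* |p ln p| = sqrt p |sqrt p ln p| <= (|a| + |b|) |sqrt p ln p|, and sqrt p ln p -> 0 *)
have [a0 b0] := sqmod_eq0 p0.
rewrite /dplnp /dsqmod a0 b0 !mul0r addr0 mulr0 mul0r.
have z0 : `|Num.sqrt (sqmod a b s) * ln (sqmod a b s)| @[s --> t] --> 0.
  by rewrite -[X in _ --> X](normr0 R); apply: cvg_norm; exact: sqrt_sqmod_mul_ln_cvg0.
apply: (is_derive_eq0_of_bound da db a0 b0 _ z0); first by rewrite /plnp p0 mul0r.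
move=> s; rewrite /plnp -{1}(sqr_sqrtr (sqmod_ge0 s)) -mulrA normrM.
by rewrite ger0_norm ?sqrtr_ge0 // ler_wpM2r // sqrt_sqrD_le.
Qed.

Hypotheses (d2a : derivable (derive1 a) t 1) (d2b : derivable (derive1 b) t 1).

Lemma is_derive_dsqmod : is_derive t 1 (dsqmod a b) (d2sqmod a b t).
Proof.
have := is_deriveZ 2 (is_deriveD
  (is_deriveM (derivableP da) (derivableP d2a))
  (is_deriveM (derivableP db) (derivableP d2b))).
suff -> : d2sqmod a b t = 2 *: (a t *: 'D_1 (derive1 a) t + derive1 a t *: 'D_1 a t
  + (b t *: 'D_1 (derive1 b) t + derive1 b t *: 'D_1 b t)) by [].
rewrite /d2sqmod !derive1E /GRing.scale /=.
move: (a t) (b t) ('D_1 a t) ('D_1 b t) ('D_1 (derive1 a) t) ('D_1 (derive1 b) t).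
by move=> ? ? ? ? ? ?; ring.
Qed.

Lemma is_derive_dplnp_gt0 : 0 < sqmod a b t ->
  is_derive t 1 (dplnp a b)
    (d2sqmod a b t * (ln (sqmod a b t) + 1) + dsqmod a b t ^+ 2 / sqmod a b t).
Proof.
move=> p_gt0; have := is_deriveM is_derive_dsqmod (is_deriveD
  (is_derive1_comp (is_derive1_ln p_gt0) is_derive_sqmod) (is_derive_cst (1 : R) t 1)).
suff -> : d2sqmod a b t * (ln (sqmod a b t) + 1) + dsqmod a b t ^+ 2 / sqmod a b t
  = dsqmod a b t *: ((sqmod a b t)^-1 * dsqmod a b t + 0)
    + (ln (sqmod a b t) + 1) *: d2sqmod a b t by [].
by rewrite /GRing.scale /=; field; rewrite gt_eqF.
Qed.

Lemma is_derive_dplnp_eq0 : a t = 0 -> b t = 0 ->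
  derive1 a t = 0 -> derive1 b t = 0 -> is_derive t 1 (dplnp a b) 0.
Proof.
move=> a0 b0 a'0 b'0; have [p0 d0 _] := sqmod_vanish a0 b0 a'0 b'0.
pose z s := 2 * (`|Num.sqrt (sqmod a b s) * ln (sqmod a b s)| + Num.sqrt (sqmod a b s)).
have z0 : z s @[s --> t] --> 0.
  rewrite -[X in _ --> X](mulr0 2) -[X in 2 * X](addr0 0).
  apply: cvgM; first exact: cvg_cst.
  apply: cvgD.
    rewrite -[X in _ --> X](normr0 R); apply: cvg_norm.
    exact: sqrt_sqmod_mul_ln_cvg0.
  have := cvg_comp _ _ sqmod_cvg (@sqrt_continuous R (sqmod a b t)).
  by rewrite p0 sqrtr0.
apply: (is_derive_eq0_of_bound d2a d2b a'0 b'0 _ z0).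
  by rewrite /dplnp d0 mul0r.
move=> s; set A := `|derive1 a s| + `|derive1 b s|.
set q := Num.sqrt (sqmod a b s); have q_ge0 : 0 <= q := sqrtr_ge0 _.
rewrite /dplnp normrM (le_trans (ler_wpM2r _ (normr_dsqmod_le s))) //.
have -> : 2 * q * A * `|ln (sqmod a b s) + 1| = A * (2 * `|q * ln (sqmod a b s) + q|).
  by rewrite -{3}[q]mulr1 -mulrDr normrM (ger0_norm q_ge0); ring.
rewrite ler_wpM2l ?addr_ge0 // ler_wpM2l //.
by apply: (le_trans (ler_normD _ _)); rewrite (ger0_norm q_ge0).
Qed.

End Sqmod.

Lemma sum_pair {V : nmodType} {N : nat} {F : 'I_N -> V} {i j : 'I_N} : i != j ->
  (forall x, x != i -> x != j -> F x = 0) -> \sum_x F x = F i + F j.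
Proof.
move=> ij F0; rewrite (bigD1 i) //= (bigD1 j) 1?eq_sym //= big1 ?addr0 //.
by move=> x /andP[xi xj]; apply: F0.
Qed.

Section SqmodFamily.
Context {N : nat} {a b : 'I_N -> R -> R}.
Hypotheses (da : forall x t, derivable (a x) t 1) (db : forall x t, derivable (b x) t 1).
Hypotheses (d2a : forall x t, derivable (derive1 (a x)) t 1)
           (d2b : forall x t, derivable (derive1 (b x)) t 1).
Hypothesis sum_sqmod : forall t, \sum_x sqmod (a x) (b x) t = 1.

Lemma is_derive_shannon_sqmod t :
  is_derive t 1 (fun s => shannon (fun x => sqmod (a x) (b x) s))
    (- \sum_x dplnp (a x) (b x) t).
Proof.
have := is_deriveN (is_derive_sum (fun x => is_derive_plnp (da x t) (db x t))).
suff -> : (fun s => shannon (fun x => sqmod (a x) (b x) s)) =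
  - \sum_x plnp (a x) (b x) by [].
by apply/funext => s; rewrite /shannon /= fct_sumE.
Qed.

Lemma sum_dsqmod t : \sum_x dsqmod (a x) (b x) t = 0.
Proof.
case: (is_derive_sum (fun x => is_derive_sqmod (da x t) (db x t))) => _ <-.
suff -> : \sum_x sqmod (a x) (b x) = cst 1 by exact: derive_cst.
by apply/funext => s; rewrite fct_sumE sum_sqmod.
Qed.

Lemma sum_d2sqmod t : \sum_x d2sqmod (a x) (b x) t = 0.
Proof.
case: (is_derive_sum (fun x =>
  is_derive_dsqmod (da x t) (db x t) (d2a x t) (d2b x t))) => _ <-.
suff -> : \sum_x dsqmod (a x) (b x) = cst 0 by exact: derive_cst.
by apply/funext => s; rewrite fct_sumE sum_dsqmod.
Qed.

Lemma is_derive2_shannon_sqmod t (i j : 'I_N) : i != j ->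
  sqmod (a i) (b i) t = sqmod (a j) (b j) t ->
  (forall x, x != i -> x != j -> [/\ a x t = 0, b x t = 0,
    derive1 (a x) t = 0 & derive1 (b x) t = 0]) ->
  is_derive t 1 (fun s => - \sum_x dplnp (a x) (b x) s)
    (- (dsqmod (a i) (b i) t - dsqmod (a j) (b j) t) ^+ 2).
Proof.
move=> ij pij vanish.
(* Only i and j contribute, with p_i = p_j = 1/2, d_i + d_j = 0 and d2_i + d2_j = 0. *)
pose p x := sqmod (a x) (b x) t; pose d x := dsqmod (a x) (b x) t.
pose d2 x := d2sqmod (a x) (b x) t.
pose g x := d2 x * (ln (p x) + 1) + d x ^+ 2 / p x.
have others x : x != i -> x != j -> [/\ p x = 0, d x = 0 & d2 x = 0].
  by move=> xi xj; have [a0 b0 a'0 b'0] := vanish x xi xj; apply: sqmod_vanish.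
have pij1 : p i + p j = 1.
  rewrite -(sum_sqmod t) (sum_pair ij) // => x xi xj.
  by have [] := others x xi xj.
have [pi_half pj_half] : p i = 2^-1 /\ p j = 2^-1.
  by move: pij pij1; rewrite -/(p i) -/(p j); lra.
have dij : d i + d j = 0.
  rewrite -(sum_dsqmod t) (sum_pair ij) // => x xi xj.
  by have [] := others x xi xj.
have d2ij : d2 i + d2 j = 0.
  rewrite -(sum_d2sqmod t) (sum_pair ij) // => x xi xj.
  by have [] := others x xi xj.
have dg x : is_derive t 1 (dplnp (a x) (b x)) (g x).
  have [->|xi] := eqVneq x i.
    by apply: is_derive_dplnp_gt0 => //; rewrite [sqmod _ _ _]pi_half invr_gt0.
  have [->|xj] := eqVneq x j.
    by apply: is_derive_dplnp_gt0 => //; rewrite [sqmod _ _ _]pj_half invr_gt0.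
  have [_ d0 d20] := others x xi xj; have [a0 b0 a'0 b'0] := vanish x xi xj.
  rewrite /g d0 d20 expr0n /= !mul0r add0r.
  exact: is_derive_dplnp_eq0.
have sum_g : \sum_x g x = (d i - d j) ^+ 2.
  rewrite (sum_pair ij); last first.
    move=> x xi xj; have [_ d0 d20] := others x xi xj.
    by rewrite /g d0 d20 expr0n /= !mul0r addr0.
  rewrite /g pi_half pj_half invrK addrACA -mulrDl d2ij mul0r add0r.
  have -> : d j = - d i by rewrite -(subr0 (d j)) -dij; ring.
  ring.
suff -> : (fun s => - \sum_x dplnp (a x) (b x) s) = - \sum_x dplnp (a x) (b x).
  by rewrite -sum_g; exact: is_deriveN (is_derive_sum dg).
by apply/funext => s; rewrite /= fct_sumE.
Qed.

End SqmodFamily.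

Lemma derive1n2_shift {F G : R -> R} {lam d2 : R} :
  (forall t, is_derive t 1 F (G t)) -> is_derive lam 1 G d2 ->
  let f := fun d => F (lam + d) in
  (\forall d \near 0, derivable f d 1) /\ derivable (derive1 f) 0 1 /\
  derive1n 2 f 0 = d2.
Proof.
move=> dF dG f.
have shiftP (g : R -> R) d dg :
    is_derive (lam + d) 1 g dg -> is_derive d 1 (fun e => g (lam + e)) dg.
  rewrite addrC => dg_d.
  have := @is_derive1_comp _ g (shift lam) d dg 1 dg_d (is_derive_shift d 1 lam).
  by rewrite mulr1; congr is_derive; apply/funext => e; rewrite /= addrC.
have df (d : R) : is_derive d 1 f (G (lam + d)) by apply: shiftP.
have f'E : derive1 f = fun d => G (lam + d).
  by apply/funext => d; rewrite derive1E; case: (df d).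
have d2f : is_derive (0 : R) 1 (derive1 f) d2.
  by rewrite f'E; apply: shiftP; rewrite addr0.
split; first by near=> d; case: (df d).
split; first by case: d2f.
by rewrite derive1nS derive1n1 derive1E; case: d2f.
Unshelve. all: by end_near.
Qed.

End RealAnalysis.

Section InnerProduct.
Context {R : realType} {N : nat}.
Local Notation C := R[i].
Implicit Types (u w y : 'cV[C]_N) (U A : 'M[C]_N).

Lemma cdotC u w : cdot u w = (cdot w u)^*.
Proof.
rewrite /cdot rmorph_sum; apply: eq_bigr => k _.
by rewrite rmorphM /= conjCK mulrC.
Qed.

Lemma cdotDr u w y : cdot u (w + y) = cdot u w + cdot u y.
Proof. by rewrite /cdot -big_split; apply: eq_bigr => k _; rewrite mxE mulrDr. Qed.

Lemma cdotZr u w (z : C) : cdot u (z *: w) = z * cdot u w.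
Proof. by rewrite /cdot mulr_sumr; apply: eq_bigr => k _; rewrite mxE mulrCA. Qed.

Lemma cdotBr u w y : cdot u (w - y) = cdot u w - cdot u y.
Proof. by rewrite -scaleN1r cdotDr cdotZr mulN1r. Qed.

Lemma cdotDl u w y : cdot (u + w) y = cdot u y + cdot w y.
Proof. by rewrite cdotC cdotDr rmorphD /= -!cdotC. Qed.

Lemma cdotZl u w (z : C) : cdot (z *: u) w = z^* * cdot u w.
Proof. by rewrite cdotC cdotZr rmorphM /= -cdotC. Qed.

Lemma cdotBl u w y : cdot (u - w) y = cdot u y - cdot w y.
Proof. by rewrite cdotC cdotBr rmorphB /= -!cdotC. Qed.

Lemma Re_cdot u w : complex.Re (cdot u w) =
  \sum_k (complex.Re (u k 0) * complex.Re (w k 0)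
          + complex.Im (u k 0) * complex.Im (w k 0)).
Proof.
rewrite /cdot raddf_sum; apply: eq_bigr => k _.
by case: (u k 0) => a b; case: (w k 0) => c d /=; ring.
Qed.

Lemma Im_cdot u w : complex.Im (cdot u w) = complex.Re (cdot ('i%C *: u) w).
Proof. by rewrite cdotZl; case: (cdot u w) => a b /=; ring. Qed.

Lemma Re_conjM (z w : C) :
  complex.Re (z^* * w) = complex.Re z * complex.Re w + complex.Im z * complex.Im w.
Proof. by case: z => a b; case: w => c d /=; ring. Qed.

Lemma cdot_self u :
  cdot u u = (\sum_k (complex.Re (u k 0) ^+ 2 + complex.Im (u k 0) ^+ 2))%:C%C.
Proof.
rewrite /cdot rmorph_sum; apply: eq_bigr => k _.
case: (u k 0) => a b; apply/eqP; rewrite eq_complex /=.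
by apply/andP; split; apply/eqP; ring.
Qed.

Lemma sqr_Re_Im_gt0 (z : C) : z != 0 -> 0 < complex.Re z ^+ 2 + complex.Im z ^+ 2.
Proof. by move=> z0; rewrite -ltcR add_Re2_Im2 exprn_gt0 ?normr_gt0. Qed.

Lemma Re_cdot_self_gt0 u : u != 0 -> 0 < complex.Re (cdot u u).
Proof.
move=> u0; have [k uk0] : exists k, u k 0 != 0.
  apply/existsP; apply: contraNT u0 => /existsPn u0; apply/eqP/matrixP => k l.
  by rewrite (ord1 l) mxE; apply/eqP; move: (u0 k); rewrite negbK.
rewrite cdot_self /= (bigD1 k) //= ltr_pwDl ?sqr_Re_Im_gt0 ?sumr_ge0 // => l _.
by rewrite addr_ge0 ?sqr_ge0.
Qed.

Lemma cdot_onb_sum U u : orthonormal_basis U ->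
  \sum_x (cdot (col x U) u)^* * cdot (col x U) u = cdot u u.
Proof.
(* V U = 1 forces U V = 1, so u |-> V u preserves cdot. *)
move=> U_onb; set V := (map_mx Num.conj U)^T.
have VU : V *m U = 1%:M.
  by apply/matrixP => k l; rewrite !mxE -U_onb /cdot; apply: eq_bigr => m _; rewrite !mxE.
have cdot_colE x : cdot (col x U) u = (V *m u) x 0.
  by rewrite /cdot mxE; apply: eq_bigr => k _; rewrite !mxE.
have cdotE w1 w2 : cdot w1 w2 = ((map_mx Num.conj w1)^T *m w2) 0 0.
  by rewrite /cdot mxE; apply: eq_bigr => k _; rewrite !mxE.
under eq_bigr do rewrite cdot_colE.
rewrite -[LHS]/(cdot (V *m u) (V *m u)) !cdotE map_mxM trmx_mul mulmxA.
have -> : (map_mx Num.conj V)^T = U by apply/matrixP => k l; rewrite !mxE conjCK.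
by rewrite -(mulmxA _ U) (mulmx1C VU) mulmx1.
Qed.

Lemma ketbra_mulmx u w y : ketbra u w *m y = cdot w y *: u.
Proof.
apply/matrixP => k l; rewrite !mxE /cdot mulr_suml; apply: eq_bigr => m _.
by rewrite mxE (ord1 l); ring.
Qed.

Lemma ketbra_idem u : cdot u u = 1 -> ketbra u u *m ketbra u u = ketbra u u.
Proof.
move=> u1; apply/matrixP => k l; rewrite -[in RHS](mul1r (ketbra u u k l)) -u1.
by rewrite !mxE /cdot mulr_suml; apply: eq_bigr => m _; rewrite !mxE; ring.
Qed.

Lemma spectrum_idem {A} {z : C} : A *m A = A -> z \in spectrum A -> z = 0 \/ z = 1.
Proof.
move=> AA; rewrite /spectrum; case: closed_field_poly_normal => r /= charAE zr.
have : root (char_poly A) z.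
  by rewrite charAE rootZ ?root_prod_XsubC // lead_coef_eq0 monic_neq0 // char_poly_monic.
rewrite -eigenvalue_root_char => /eigenvalueP [w wA w0].
have /eqP : (z * z) *: w = z *: w by rewrite -scalerA -wA scalemxAl -wA -mulmxA AA.
rewrite -subr_eq0 -scalerBl scaler_eq0 (negbTE w0) orbF subr_eq0 => /eqP zz.
have [->|z0] := eqVneq z 0; [by left | right].
by apply: (mulfI z0); rewrite zz mulr1.
Qed.

Lemma vonNeumann_idem A : A *m A = A -> vonNeumann A = 0.
Proof.
move=> AA; rewrite /vonNeumann big_seq big1 ?oppr0 // => z /(spectrum_idem AA) [] ->.
  by rewrite mul0r.
by rewrite ln1 mulr0.
Qed.

Lemma coherence_pure U u : cdot u u = 1 ->
  coherence U (ketbra u u) =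
  shannon (fun x => complex.Re ((cdot (col x U) u)^* * cdot (col x U) u)).
Proof.
move=> u1; rewrite /coherence vonNeumann_idem ?ketbra_idem // oppr0 add0r.
by congr shannon; apply/funext => x; rewrite ketbra_mulmx cdotZr -cdotC.
Qed.

End InnerProduct.

Section CurveCoordinates.
Context {R : realType} {N : nat}.
Local Notation C := R[i].
Implicit Types (psi : R -> 'cV[C]_N) (U : 'M[C]_N) (w : 'cV[C]_N).

Definition curve_derivable psi := forall k t,
  derivable (fun s => complex.Re (psi s k 0)) t 1 /\
  derivable (fun s => complex.Im (psi s k 0)) t 1.

Lemma curveC2_derivable psi : curveC2 psi -> curve_derivable psi.
Proof. by move=> psiC2 k t; have [[? _] [? _]] := psiC2 k. Qed.

Lemma curveC2_derivable_dcurve psi : curveC2 psi -> curve_derivable (dcurve psi).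
Proof.
move=> psiC2 k t; have [[_ [dre _]] [_ [dim _]]] := psiC2 k.
have -> : (fun s => complex.Re (dcurve psi s k 0)) =
          derive1 (fun s => complex.Re (psi s k 0)).
  by apply/funext => s; rewrite mxE.
have -> : (fun s => complex.Im (dcurve psi s k 0)) =
          derive1 (fun s => complex.Im (psi s k 0)).
  by apply/funext => s; rewrite mxE.
by split.
Qed.

Lemma is_derive_Re_cdot psi w (t : R) : curve_derivable psi ->
  is_derive t 1 (fun s => complex.Re (cdot w (psi s)))
    (complex.Re (cdot w (dcurve psi t))).
Proof.
move=> dpsi.
have -> : complex.Re (cdot w (dcurve psi t)) =
    \sum_k (complex.Re (w k 0) *: 'D_1 (fun s => complex.Re (psi s k 0)) t
          + complex.Im (w k 0) *: 'D_1 (fun s => complex.Im (psi s k 0)) t).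
  by rewrite Re_cdot; apply: eq_bigr => k _; rewrite /dcurve mxE /= !derive1E.
have -> : (fun s => complex.Re (cdot w (psi s))) =
    \sum_k (complex.Re (w k 0) *: (fun s => complex.Re (psi s k 0))
          + complex.Im (w k 0) *: (fun s => complex.Im (psi s k 0))).
  by apply/funext => s; rewrite Re_cdot fct_sumE; apply: eq_bigr => k _.
exact: is_derive_sum (fun k =>
  is_deriveD (is_deriveZ (complex.Re (w k 0)) (derivableP (dpsi k t).1))
             (is_deriveZ (complex.Im (w k 0)) (derivableP (dpsi k t).2))).
Qed.

Lemma is_derive_Im_cdot psi w (t : R) : curve_derivable psi ->
  is_derive t 1 (fun s => complex.Im (cdot w (psi s)))
    (complex.Im (cdot w (dcurve psi t))).
Proof.
move=> /(is_derive_Re_cdot _ ('i%C *: w) t); rewrite -Im_cdot.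
by congr is_derive; apply/funext => s; rewrite Im_cdot.
Qed.


Variables (psi : R -> 'cV[C]_N) (U : 'M[C]_N).

Definition coord_re (x : 'I_N) t := complex.Re (cdot (col x U) (psi t)).
Definition coord_im (x : 'I_N) t := complex.Im (cdot (col x U) (psi t)).

Lemma coherence_curve t : cdot (psi t) (psi t) = 1 ->
  coherence U (ketbra (psi t) (psi t)) =
  shannon (fun x => sqmod (coord_re x) (coord_im x) t).
Proof.
move=> psi1; rewrite coherence_pure //; congr shannon; apply/funext => x.
by rewrite Re_conjM /sqmod !expr2.
Qed.

Lemma sum_sqmod_coord : orthonormal_basis U -> (forall t, cdot (psi t) (psi t) = 1) ->
  forall t, \sum_x sqmod (coord_re x) (coord_im x) t = 1.
Proof.
move=> U_onb psi1 t.
under eq_bigr do rewrite /sqmod /coord_re /coord_im !expr2 -Re_conjM.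
by rewrite -raddf_sum cdot_onb_sum // psi1.
Qed.

Lemma dsqmod_coord x t : curve_derivable psi ->
  dsqmod (coord_re x) (coord_im x) t =
  2 * complex.Re ((cdot (col x U) (psi t))^* * cdot (col x U) (dcurve psi t)).
Proof.
move=> dpsi; rewrite /dsqmod Re_conjM !derive1E.
have [_ ->] := is_derive_Re_cdot _ (col x U) t dpsi.
by have [_ ->] := is_derive_Im_cdot _ (col x U) t dpsi.
Qed.

Hypothesis psi_C2 : curveC2 psi.

Lemma derivable_coord_re x t : derivable (coord_re x) t 1.
Proof. by case: (is_derive_Re_cdot _ (col x U) t (curveC2_derivable _ psi_C2)). Qed.

Lemma derivable_coord_im x t : derivable (coord_im x) t 1.
Proof. by case: (is_derive_Im_cdot _ (col x U) t (curveC2_derivable _ psi_C2)). Qed.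

Lemma derive1_coord_re x :
  derive1 (coord_re x) = fun t => complex.Re (cdot (col x U) (dcurve psi t)).
Proof.
apply/funext => t; rewrite derive1E.
by case: (is_derive_Re_cdot _ (col x U) t (curveC2_derivable _ psi_C2)).
Qed.

Lemma derive1_coord_im x :
  derive1 (coord_im x) = fun t => complex.Im (cdot (col x U) (dcurve psi t)).
Proof.
apply/funext => t; rewrite derive1E.
by case: (is_derive_Im_cdot _ (col x U) t (curveC2_derivable _ psi_C2)).
Qed.

Lemma derivable_derive1_coord_re x t : derivable (derive1 (coord_re x)) t 1.
Proof.
rewrite derive1_coord_re.
by case: (is_derive_Re_cdot _ (col x U) t (curveC2_derivable_dcurve _ psi_C2)).
Qed.

Lemma derivable_derive1_coord_im x t : derivable (derive1 (coord_im x)) t 1.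
Proof.
rewrite derive1_coord_im.
by case: (is_derive_Im_cdot _ (col x U) t (curveC2_derivable_dcurve _ psi_C2)).
Qed.

Lemma coord_vanish x t :
  cdot (col x U) (psi t) = 0 -> cdot (col x U) (dcurve psi t) = 0 ->
  [/\ coord_re x t = 0, coord_im x t = 0,
      derive1 (coord_re x) t = 0 & derive1 (coord_im x) t = 0].
Proof.
by move=> x0 x'0; rewrite derive1_coord_re derive1_coord_im /coord_re /coord_im x0 x'0.
Qed.

End CurveCoordinates.

Section PlusMinusBasis.
Context {R : realType} {N : nat}.
Local Notation C := R[i].

Lemma conjC_real (r : R) : (r%:C%C : C)^* = r%:C%C.
Proof. by apply/eqP; rewrite eq_complex /= oppr0 !eqxx. Qed.

Lemma cdot_perp_unit {u} (w : 'cV[C]_N) : cdot u u = 1 -> cdot (w - cdot u w *: u) u = 0.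
Proof. by move=> u1; rewrite cdotBl cdotZl -cdotC u1 mulr1 subrr. Qed.

Lemma cdot_add_orth (w e : 'cV[C]_N) (z : C) : cdot w e = 0 -> cdot e e = 1 ->
  cdot (w + z *: e) (w + z *: e) = cdot w w + z^* * z.
Proof.
move=> we e1; rewrite cdotDl !cdotDr !cdotZl !cdotZr we (cdotC e w) we e1.
by rewrite conjC0 !mulr0 !addr0 add0r mulr1.
Qed.

Lemma gFS_perp (u w : 'cV[C]_N) : cdot u u = 1 ->
  gFS u w = complex.Re (cdot (w - cdot u w *: u) (w - cdot u w *: u)).
Proof.
move=> u1; rewrite /gFS -{1 2}[w](subrK (cdot u w *: u)).
rewrite cdot_add_orth ?cdot_perp_unit // (cdotC w u) conjCK.
by rewrite raddfD /= mulrC addrK.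
Qed.

Context {ket0 v : 'cV[C]_N} {U : 'M[C]_N} {i j : 'I_N}.
Let vperp := v - cdot ket0 v *: ket0.
Let n := Num.sqrt (complex.Re (cdot vperp vperp)).
Let c : C := (n^-1)%:C%C.
Let s : C := ((Num.sqrt 2)^-1)%:C%C.
Hypotheses (ket0_unit : cdot ket0 ket0 = 1) (U_onb : orthonormal_basis U).
Hypothesis vperp_neq0 : vperp != 0.
Hypotheses (Ui : col i U = s *: (ket0 + c *: vperp))
           (Uj : col j U = s *: (ket0 - c *: vperp)).

Let vperp_ket0 : cdot vperp ket0 = 0 := cdot_perp_unit v ket0_unit.

Lemma cdot_plus_ket0 : cdot (col i U) ket0 = s.
Proof.
by rewrite Ui cdotZl cdotDl cdotZl ket0_unit vperp_ket0 !conjC_real mulr0 addr0 mulr1.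
Qed.

Lemma cdot_minus_ket0 : cdot (col j U) ket0 = s.
Proof.
by rewrite Uj cdotZl cdotBl cdotZl ket0_unit vperp_ket0 !conjC_real mulr0 subr0 mulr1.
Qed.

Let s_neq0 : s != 0.
Proof. by rewrite eq_complex /= negb_and invr_eq0 sqrtr_eq0 -ltNge ltr0n. Qed.

Let n_gt0 : 0 < n.
Proof. by rewrite sqrtr_gt0 Re_cdot_self_gt0. Qed.

Let c_neq0 : c != 0.
Proof. by rewrite eq_complex /= negb_and invr_eq0 (gt_eqF n_gt0). Qed.

Let col_plus_sub_minus :
  col i U - col j U = ((Num.sqrt 2)^-1 * n^-1 *+ 2)%:C%C *: vperp.
Proof. by rewrite Ui Uj; apply/matrixP => k l; rewrite !mxE; ring. Qed.

Lemma plus_neq_minus : i != j.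
Proof.
apply: contraNneq vperp_neq0 => ij; move/eqP: col_plus_sub_minus.
rewrite ij subrr eq_sym scaler_eq0 orbC => /orP[] // /eqP/complexI/eqP.
by rewrite gt_eqF // pmulrn_lgt0 // mulr_gt0 // invr_gt0 // sqrtr_gt0.
Qed.

Lemma cdot_other_ket0_v x : x != i -> x != j ->
  cdot (col x U) ket0 = 0 /\ cdot (col x U) v = 0.
Proof.
move=> xi xj.
have /eqP : cdot (col x U) (col i U) = 0 by rewrite U_onb (negbTE xi).
have /eqP : cdot (col x U) (col j U) = 0 by rewrite U_onb (negbTE xj).
rewrite Ui Uj !cdotZr cdotBr cdotDr !cdotZr !mulf_eq0 (negbTE s_neq0) /=.
set c0 := cdot (col x U) ket0; set cp := cdot (col x U) vperp.
move=> /eqP minus0 /eqP plus0.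
have /eqP : 2 * c0 = 0 by rewrite -[RHS](addr0 0) -{1}plus0 -minus0; ring.
rewrite mulf_eq0 pnatr_eq0 /= => /eqP c00.
have /eqP : 2 * c * cp = 0 by rewrite -[RHS](subr0 0) -{1}plus0 -minus0; ring.
rewrite !mulf_eq0 pnatr_eq0 (negbTE c_neq0) /= => /eqP cp0.
rewrite -[v](subrK (cdot ket0 v *: ket0)) -/vperp cdotDr cdotZr -/c0 -/cp.
by rewrite c00 cp0 mulr0 addr0.
Qed.

Let cdot_vperp : cdot vperp vperp = (n ^+ 2)%:C%C.
Proof. by rewrite sqr_sqrtr ?ltW ?Re_cdot_self_gt0 // cdot_self. Qed.

Let c_vperp_v : c * cdot vperp v = n%:C%C.
Proof.
rewrite -[v](subrK (cdot ket0 v *: ket0)) -/vperp cdotDr cdotZr vperp_ket0.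
by rewrite mulr0 addr0 cdot_vperp -rmorphM /= expr2 (mulKf (lt0r_neq0 n_gt0)).
Qed.

Lemma cdot_plus_v : cdot (col i U) v = s * (cdot ket0 v + n%:C%C).
Proof. by rewrite Ui cdotZl cdotDl cdotZl !conjC_real c_vperp_v. Qed.

Lemma cdot_minus_v : cdot (col j U) v = s * (cdot ket0 v - n%:C%C).
Proof. by rewrite Uj cdotZl cdotBl cdotZl !conjC_real c_vperp_v. Qed.

Lemma Re_overlap_plus_sub_minus :
  complex.Re ((cdot (col i U) ket0)^* * cdot (col i U) v)
  - complex.Re ((cdot (col j U) ket0)^* * cdot (col j U) v) = n.
Proof.
rewrite cdot_plus_ket0 cdot_minus_ket0 cdot_plus_v cdot_minus_v conjC_real /s.
case: (cdot ket0 v) => a b /=; transitivity (2 * (Num.sqrt 2)^-1 ^+ 2 * n); first by ring.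
by rewrite exprVn sqr_sqrtr // mulfV ?pnatr_eq0 // mul1r.
Qed.

End PlusMinusBasis.

Theorem proposition2 (R : realType) (N : nat) (psi : R -> 'cV[R[i]]_N)
  (hunit : forall t : R, cdot (psi t) (psi t) = 1)
  (hC2 : curveC2 psi)
  (lam : R) (U : 'M[R[i]]_N) (hU : orthonormal_basis U) :
  let ket0 := psi lam in
  let v := dcurve psi lam in
  let vperp := v - cdot ket0 v *: ket0 in
  let c := ((Num.sqrt (complex.Re (cdot vperp vperp)))^-1)%:C%C in
  let s := ((Num.sqrt (2 : R))^-1)%:C%C in
  let ketplus := s *: (ket0 + c *: vperp) in
  let ketminus := s *: (ket0 - c *: vperp) in
  vperp != 0 ->
  (exists i : 'I_N, col i U = ketplus) ->
  (exists j : 'I_N, col j U = ketminus) ->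
  let f := fun dl : R => coherence U (ketbra (psi (lam + dl)) (psi (lam + dl))) in
  (\forall dl \near (0 : R), derivable f dl 1) /\
  derivable (derive1 f) 0 1 /\
  - derive1n 2 f 0 = 4 * gFS ket0 v.
Proof.
move=> ket0 v vperp c s ketplus ketminus vperp0 [i Ui] [j Uj] f.
have da := derivable_coord_re psi U hC2; have db := derivable_coord_im psi U hC2.
have d2a := derivable_derive1_coord_re psi U hC2.
have d2b := derivable_derive1_coord_im psi U hC2.
have sum1 := sum_sqmod_coord psi U hU hunit.
have ij := plus_neq_minus vperp0 Ui Uj.
have p_ij : sqmod (coord_re psi U i) (coord_im psi U i) lam =
            sqmod (coord_re psi U j) (coord_im psi U j) lam.
  rewrite /sqmod /coord_re /coord_im.
  by rewrite (cdot_plus_ket0 (hunit lam) Ui) (cdot_minus_ket0 (hunit lam) Uj).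
have vanish x : x != i -> x != j ->
    [/\ coord_re psi U x lam = 0, coord_im psi U x lam = 0,
        derive1 (coord_re psi U x) lam = 0 & derive1 (coord_im psi U x) lam = 0].
  move=> xi xj; have [] := cdot_other_ket0_v hU vperp0 Ui Uj x xi xj.
  exact: coord_vanish.
have fE : f = fun d =>
    shannon (fun x => sqmod (coord_re psi U x) (coord_im psi U x) (lam + d)).
  by apply/funext => d; rewrite /f coherence_curve.
rewrite fE; have [df [d2f ->]] := derive1n2_shift (is_derive_shannon_sqmod da db)
  (is_derive2_shannon_sqmod da db d2a d2b sum1 lam _ _ ij p_ij vanish).
split => //; split => //.
have dpsi := curveC2_derivable psi hC2.
rewrite opprK (dsqmod_coord psi U i lam dpsi) (dsqmod_coord psi U j lam dpsi).
rewrite -mulrBr (Re_overlap_plus_sub_minus (hunit lam) vperp0 Ui Uj).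
by rewrite (gFS_perp _ v (hunit lam)) exprMn sqr_sqrtr ?ltW ?Re_cdot_self_gt0 // -natrX.
Qed.
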